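(* There is a universal constant $C$ such that for all positive integers $k,n$ and all distinct integers $g_0,g_1$, there is a $k$-party, one-round, deterministic protocol for the Sum-Distinguish problem over $\mathbb{Z}$ with $n$-bit inputs relative to $g_0,g_1$ with total communication complexity at most $k\log k+C\cdot k$.
   Context: Model: parties $P_1,\dots,P_k$ each hold an integer input $x_i\in\{0,\dots,2^n-1\}$; a coordinator (distinct from the parties) wants to compute $f(x_1,\dots,x_k)$. In a deterministic one-round protocol each party sends a single message, a function of its own input only, to the coordinator, who outputs a value depending only on the received messages; there is no other communication. Total communication complexity is the maximum over inputs of the total number of bits sent. Sum-Distinguish over $\mathbb{Z}$ relative to distinct integers $g_0,g_1$: the partial function $f=1$ if $\sum_i x_i=g_1$ and $f=0$ if $\sum_i x_i=g_0$ (undefined otherwise); the protocol must output the correct value on every input where $f$ is defined. $\log$ is base 2. *)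

From Stdlib Require Import Reals.
From mathcomp Require Import all_boot all_order all_algebra.

Set Implicit Arguments.
Unset Strict Implicit.
Unset Printing Implicit Defensive.

(* A deterministic one-round k-party protocol with a coordinator:
   party i sends the bit string [msg i x_i] (depending only on its own input),
   and the coordinator outputs [out m] from the tuple of received messages. *)
Record protocol (k : nat) := Protocol {
  msg : 'I_k -> nat -> seq bool;
  out : ('I_k -> seq bool) -> bool
}.

Definition valid_input (k n : nat) (x : 'I_k -> nat) : Prop :=
  forall i : 'I_k, x i < 2 ^ n.

Definition run (k : nat) (P : protocol k) (x : 'I_k -> nat) : bool :=
  out P (fun i => msg P i (x i)).

Definition input_sum (k : nat) (x : 'I_k -> nat) : int :=
  (\sum_(i < k) Posz (x i))%R.

Definition solves_sum_distinguish (k n : nat) (g0 g1 : int) (P : protocol k)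
  : Prop :=
  forall x : 'I_k -> nat, valid_input n x ->
    (input_sum x = g1 -> run P x = true) /\
    (input_sum x = g0 -> run P x = false).

Definition bits_sent (k : nat) (P : protocol k) (x : 'I_k -> nat) : nat :=
  \sum_(i < k) size (msg P i (x i)).

Definition total_cc_le (k n : nat) (P : protocol k) (B : R) : Prop :=
  forall x : 'I_k -> nat, valid_input n x -> Rle (INR (bits_sent P x)) B.

Definition log2 (t : R) : R := Rdiv (ln t) (ln 2).

(** Write [g1 - g0 = 2^t * o] with [o] odd.  Modulo [M = 2^(t+1)] the two
    target sums then differ by exactly [M/2].  Choose [b] with [k <= 2^b] and
    [q = 2^(t-b)]: each party sends the [b+1]-bit number [(x_i mod M) / q], so
    the coordinator learns the input sum modulo [M] up to an error smaller
    than [k q <= 2^t = M/2], which is enough to tell [g1] from [g0].  With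
    [b = ceil(log k)] this costs [k (b + 1) <= k log k + 2k] bits, whatever
    the input length [n]. *)
From Stdlib Require Import Reals Lra.
From mathcomp Require Import all_boot all_order all_algebra zify ring.

Set Implicit Arguments.
Unset Strict Implicit.
Unset Printing Implicit Defensive.

Fixpoint bits_of (l w : nat) : seq bool :=
  if l is l'.+1 then odd w :: bits_of l' w./2 else [::].

Fixpoint nat_of_bits (s : seq bool) : nat :=
  if s is b :: s' then b + (nat_of_bits s').*2 else 0.

Lemma size_bits_of l w : size (bits_of l w) = l.
Proof. by elim: l w => //= l IH w; rewrite IH. Qed.

Lemma bits_ofK l w : w < 2 ^ l -> nat_of_bits (bits_of l w) = w.
Proof.
elim: l w => [|l IH] w /=; first by case: w.
rewrite expnS => hw; rewrite IH ?odd_double_half //.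
have := odd_double_half w; lia.
Qed.

Section Log2Bound.
Local Open Scope R_scope.

Lemma INR_le_log2 (a k : nat) : (2 ^ a <= k)%N -> INR a <= log2 (INR k).
Proof.
move=> hk.
have ln2_gt0 : 0 < ln 2 by rewrite -ln_1; apply: ln_increasing; lra.
have pow_gt0 : 0 < 2 ^ a by apply: pow_lt; lra.
have pow_le : 2 ^ a <= INR k.
  have INR_expn2 : forall e, INR (2 ^ e)%N = 2 ^ e.
    by elim=> //= e IH; rewrite expnS mult_INR IH.
  by rewrite -INR_expn2; apply: le_INR; apply/leP.
have ln_le : INR a * ln 2 <= ln (INR k).
  rewrite -ln_pow; last lra.
  case: pow_le => [lt|->]; [left; exact: ln_increasing | lra].
rewrite /log2 /Rdiv; apply: (Rmult_le_reg_r (ln 2)) => //.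
by rewrite Rmult_assoc Rinv_l; lra.
Qed.

Lemma up_log2_le_log2 (k : nat) : (0 < k)%N ->
  INR (up_log 2 k) <= log2 (INR k) + 1.
Proof.
move=> k_gt0.
have hk : (2 ^ (up_log 2 k).-1 <= k)%N.
  case: (ltngtP k 1) => [|k_gt1|->]; [lia | exact/ltnW/up_log_gtn | by rewrite up_log1].
have := INR_le_log2 hk.
have : INR (up_log 2 k) <= INR (up_log 2 k).-1 + 1.
  by rewrite -S_INR; apply: le_INR; apply/leP; lia.
lra.
Qed.

End Log2Bound.

Import GRing.Theory Num.Theory Order.TTheory.
Local Open Scope ring_scope.

Lemma int_2adic_split (d : int) : d != 0 ->
  exists t (j : int), d = j * (2 ^ t.+1)%N%:Z + (2 ^ t)%N%:Z.
Proof.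
move=> d_neq0; have d_gt0 : (0 < `|d|)%N by rewrite absz_gt0.
have [o o_odd hd] := pfactor_coprime (isT : prime 2) d_gt0.
rewrite coprime2n in o_odd.
set t := logn 2 `|d| in hd; exists t.
have ho : (o * 2 ^ t = o./2 * 2 ^ t.+1 + 2 ^ t)%N.
  by rewrite -{1}(odd_double_half o) o_odd expnS; lia.
case: (ger0P d) => d_sign.
  by exists (o./2)%:Z; rewrite -(gez0_abs d_sign) hd ho PoszD PoszM.
exists (- (o./2)%:Z - 1).
by rewrite -[d]opprK -(ltz0_abs d_sign) hd ho PoszD PoszM expnS PoszM; ring.
Qed.

Lemma sum_mod_le (k q : nat) (y : 'I_k -> nat) : (0 < q)%N ->
  (\sum_(i < k) (y i %% q) <= k * (q - 1))%N.
Proof.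
move=> q_gt0; rewrite -[k in (_ <= k * _)%N]card_ord -sum_nat_const.
by apply: leq_sum => i _; have := ltn_pmod (y i) q_gt0; lia.
Qed.

Lemma sum_divn_decomp (k M q : nat) (x : 'I_k -> nat) :
  (\sum_(i < k) x i = M * \sum_(i < k) (x i %/ M)
     + q * \sum_(i < k) ((x i %% M) %/ q) + \sum_(i < k) ((x i %% M) %% q))%N.
Proof.
rewrite !big_distrr -!big_split /=; apply: eq_bigr => i _.
rewrite {1}(divn_eq (x i) M) {1}(divn_eq (x i %% M)%N q); lia.
Qed.

Section SumProtocol.
Variables (k b t : nat) (g1 : int).

Let M := (2 ^ t.+1)%N.
Let q := (2 ^ (t - b))%N.

Definition top_bits (y : nat) : nat := ((y %% M) %/ q)%N.

Definition accepts (W : nat) : bool :=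
  ((g1 - (q * W)%N%:Z) %% M%:Z)%Z <= (k * (q - 1))%N%:Z.

Definition sum_protocol : protocol k :=
  Protocol (fun _ y => bits_of b.+1 (top_bits y))
           (fun f => accepts (\sum_(i < k) nat_of_bits (f i))).

Lemma top_bits_lt y : (top_bits y < 2 ^ b.+1)%N.
Proof.
rewrite /top_bits ltn_divLR ?expn_gt0 // -expnD.
apply: leq_trans (ltn_pmod y _) _; first by rewrite expn_gt0.
by rewrite leq_exp2l //; lia.
Qed.

Lemma run_sum_protocol x :
  run sum_protocol x = accepts (\sum_(i < k) top_bits (x i)).
Proof.
by congr accepts; apply: eq_bigr => i _; rewrite bits_ofK ?top_bits_lt.
Qed.

Lemma bits_sent_sum_protocol x : bits_sent sum_protocol x = (k * b.+1)%N.
Proof.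
rewrite /bits_sent (eq_bigr (fun _ => b.+1)) => [|i _]; last exact: size_bits_of.
by rewrite sum_nat_const card_ord.
Qed.

Hypothesis k_le : (k <= 2 ^ b)%N.

Lemma low_error_lt : (k * (q - 1) < 2 ^ t)%N.
Proof.
case: (leqP b t) => [b_le|t_lt].
  have : (2 ^ b * q = 2 ^ t)%N by rewrite -expnD subnKC.
  have := expn_gt0 2 b; nia.
have -> : q = 1%N by rewrite /q (eqP (_ : t - b == 0)%N) // subn_eq0 ltnW.
by rewrite subnn muln0 expn_gt0.
Qed.

(* Whatever the inputs, [g1 - q W] is [s] or [s + M/2] modulo [M], where [s]
   is the sum of the discarded low parts. *)
Lemma sum_protocol_correct (g0 j : int) (x : 'I_k -> nat) :
  g1 - g0 = j * M%:Z + (2 ^ t)%N%:Z ->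
  (input_sum x = g1 -> run sum_protocol x) /\
  (input_sum x = g0 -> ~~ run sum_protocol x).
Proof.
move=> hg; rewrite run_sum_protocol /accepts.
set W := (\sum_(i < k) top_bits (x i))%N.
set A := (\sum_(i < k) (x i %/ M))%N.
set s := (\sum_(i < k) ((x i %% M) %% q))%N.
have s_le : (s <= k * (q - 1))%N by apply: sum_mod_le; rewrite expn_gt0.
have err_lt := low_error_lt.
have hsum : input_sum x = (M * A + q * W + s)%N%:Z.
  by rewrite -sum_divn_decomp /input_sum (big_morph Posz PoszD (erefl _)).
have M_eq : M = (2 ^ t + 2 ^ t)%N by rewrite /M expnS; lia.
split => hx.
  have -> : g1 - (q * W)%N%:Z = A%:Z * M%:Z + s%:Z.
    by rewrite -hx hsum !PoszD !PoszM; ring.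
  rewrite modzMDl modz_small ?lez_nat //.
  by apply/andP; split => //; rewrite ltz_nat; lia.
have -> : g1 - (q * W)%N%:Z = (j + A%:Z) * M%:Z + (2 ^ t + s)%N%:Z.
  have -> : g1 = g0 + (j * M%:Z + (2 ^ t)%N%:Z) by rewrite -hg; ring.
  by rewrite -hx hsum !PoszD !PoszM; ring.
rewrite modzMDl modz_small ?lez_nat -?ltnNge; first lia.
by apply/andP; split => //; rewrite ltz_nat; lia.
Qed.

End SumProtocol.

Theorem mainTheorem10 :
  exists C : R,
    forall (k n : nat) (g0 g1 : int),
      (0 < k)%N -> (0 < n)%N -> g0 <> g1 ->
      exists P : protocol k,
        solves_sum_distinguish n g0 g1 P /\
        total_cc_le n P (Rplus (Rmult (INR k) (log2 (INR k))) (Rmult C (INR k))).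
Proof.
exists (2 : R) => k n g0 g1 k_gt0 _ g_neq.
have [t [j hg]] : exists t (j : int), g1 - g0 = j * (2 ^ t.+1)%N%:Z + (2 ^ t)%N%:Z.
  by apply: int_2adic_split; rewrite subr_eq0; apply/eqP => /esym.
have k_le := up_logP k (isT : (1 < 2)%N).
exists (sum_protocol k (up_log 2 k) t g1); split => x _.
  have [accept_g1 reject_g0] := sum_protocol_correct k_le x hg.
  by split => [/accept_g1 | /reject_g0/negbTE].
rewrite bits_sent_sum_protocol mult_INR S_INR.
have := up_log2_le_log2 k_gt0; have := pos_INR k; nra.
Qed.
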